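(* Let $T_1,\dots,T_n$ be triangles in $E$, let $S$ be the set of vertices of $\bigcap_{i=1}^nT_i$, let $0<\epsilon<1$, and let $P$ be the convex hull of all vertices of $T_1^{(1-\epsilon)},\dots,T_n^{(1-\epsilon)}$. Then $(P,S)$ is a NO instance of the intermediate polygon problem, i.e. there is no triangle $T$ with $S\subseteq T\subseteq P$.
   Context: For $d>0$ let $C_d=\{(x,y)\in\mathbb{R}^2: x^2+y^2\le d\}$, and $C=C_1$. $E$ is the set of all equilateral triangles $T\subseteq C$ whose vertices lie on the boundary of $C$. For $T\in E$, $T^{(1-\epsilon)}$ denotes the scaling of $T$ about the origin such that the vertices of $T^{(1-\epsilon)}$ lie on the boundary of $C_{1-\epsilon}$. An instance of the intermediate polygon problem is a polygon $P\subseteq\mathbb{R}^2$ and a finite point set $S$; it is a YES instance if there is a triangle $T$ with $S\subseteq T\subseteq P$, and a NO instance otherwise. *)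

From Stdlib Require Import Reals.
Open Scope R_scope.

Definition pt : Type := (R * R)%type.

Definition comb (x y : pt) (t : R) : pt :=
  ((1 - t) * fst x + t * fst y, (1 - t) * snd x + t * snd y).

Definition scale (s : R) (x : pt) : pt := (s * fst x, s * snd x).

Definition sqnorm (x : pt) : R := fst x * fst x + snd x * snd x.
Definition sqdist (x y : pt) : R :=
  (fst x - fst y) * (fst x - fst y) + (snd x - snd y) * (snd x - snd y).

Definition convex (A : pt -> Prop) : Prop :=
  forall x y t, A x -> A y -> 0 <= t <= 1 -> A (comb x y t).

Definition hull (A : pt -> Prop) : pt -> Prop :=
  fun p => forall C : pt -> Prop, convex C -> (forall q, A q -> C q) -> C p.

Definition three (a b c : pt) : pt -> Prop := fun p => p = a \/ p = b \/ p = c.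

Definition noncollinear (a b c : pt) : Prop :=
  (fst b - fst a) * (snd c - snd a) - (snd b - snd a) * (fst c - fst a) <> 0.

Definition is_triangle (T : pt -> Prop) : Prop :=
  exists a b c, noncollinear a b c /\ forall p, T p <-> hull (three a b c) p.

Definition vertex_of (A : pt -> Prop) (x : pt) : Prop :=
  A x /\ forall y z t, A y -> A z -> y <> z -> 0 < t < 1 -> x <> comb y z t.

(* a, b, c are the vertices of a triangle of E: equilateral, non-degenerate,
   vertices on the boundary x^2+y^2 = 1 of C *)
Definition inE (a b c : pt) : Prop :=
  sqnorm a = 1 /\ sqnorm b = 1 /\ sqnorm c = 1 /\ a <> b /\
  sqdist a b = sqdist b c /\ sqdist b c = sqdist c a.

From Stdlib Require Import Reals Lra Lia Psatz List Classical.
Open Scope R_scope.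

(* Each triangle of E is {x | v . x >= -1/2 for its three vertices v}, so the intersection I of
   the T_i is a polygon cut out by unit normals, and for every unit vector w it has a vertex x
   with w . x >= 1/2.  A triangle T containing the vertices of I thus has, for every unit w, a
   corner p with w . p >= 1/2.  But the corners of T lie in P, hence in the open unit disk, and
   three points of the open disk always miss one of these half-planes: take unit vectors
   w1 + w2 + w3 = 0 all missing the first corner; a point of the open disk lies in at most one
   half-plane w_i . x >= 1/2, since two of them would force w_k . x <= -1 for the third. *)

Definition dot (x y : pt) : R := fst x * fst y + snd x * snd y.
Definition det (x y : pt) : R := fst x * snd y - snd x * fst y.
Definition perp (x : pt) : pt := (- snd x, fst x).
Definition ray (x d : pt) (t : R) : pt := (fst x + t * fst d, snd x + t * snd d).
Definition bary (a b c : pt) (la lb lc : R) : pt :=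
  (la * fst a + lb * fst b + lc * fst c, la * snd a + lb * snd b + lc * snd c).

Lemma dot_comm x y : dot x y = dot y x.
Proof. unfold dot; ring. Qed.

Lemma dot_comb v x y t : dot v (comb x y t) = (1 - t) * dot v x + t * dot v y.
Proof. unfold dot, comb; simpl; ring. Qed.

Lemma dot_ray v x d t : dot v (ray x d t) = dot v x + t * dot v d.
Proof. unfold dot, ray; simpl; ring. Qed.

Lemma dot_bary v a b c la lb lc :
  dot v (bary a b c la lb lc) = la * dot v a + lb * dot v b + lc * dot v c.
Proof. unfold dot, bary; simpl; ring. Qed.

Lemma dot_scale_perp u v s : dot u (scale s (perp v)) = s * det v u.
Proof. unfold dot, scale, perp, det; simpl; ring. Qed.

Lemma dot0r x : dot x (0, 0) = 0.
Proof. unfold dot; simpl; ring. Qed.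

Lemma sqnorm_scale s x : sqnorm (scale s x) = s * s * sqnorm x.
Proof. unfold sqnorm, scale; simpl; ring. Qed.

Lemma sqnorm_ge0 x : 0 <= sqnorm x.
Proof. unfold sqnorm; nra. Qed.

Lemma sqnorm_comb x y t :
  sqnorm (comb x y t) = (1 - t) * sqnorm x + t * sqnorm y - t * (1 - t) * sqdist x y.
Proof. unfold sqnorm, sqdist, comb; simpl; ring. Qed.

Lemma det_sq x y : det x y * det x y = sqnorm x * sqnorm y - dot x y * dot x y.
Proof. unfold det, sqnorm, dot; ring. Qed.

Lemma dot_sq_le x y : dot x y * dot x y <= sqnorm x * sqnorm y.
Proof. pose proof (det_sq x y); nra. Qed.

Lemma eq_of_dot_eq u v y z :
  det u v <> 0 -> dot u y = dot u z -> dot v y = dot v z -> y = z.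
Proof.
  destruct u as [u1 u2], v as [v1 v2], y as [y1 y2], z as [z1 z2].
  unfold det, dot; simpl; intros Hd Hu Hv.
  assert (E1 : (u1 * v2 - u2 * v1) * (y1 - z1) = 0).
  { transitivity (v2 * (u1 * y1 + u2 * y2 - (u1 * z1 + u2 * z2))
                  - u2 * (v1 * y1 + v2 * y2 - (v1 * z1 + v2 * z2))); [ring|].
    rewrite Hu, Hv; ring. }
  assert (E2 : (u1 * v2 - u2 * v1) * (y2 - z2) = 0).
  { transitivity (u1 * (v1 * y1 + v2 * y2 - (v1 * z1 + v2 * z2))
                  - v1 * (u1 * y1 + u2 * y2 - (u1 * z1 + u2 * z2))); [ring|].
    rewrite Hu, Hv; ring. }
  apply Rmult_integral in E1; apply Rmult_integral in E2.
  destruct E1 as [|E1]; [contradiction|]; destruct E2 as [|E2]; [contradiction|].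
  f_equal; lra.
Qed.

Lemma hull_incl (A : pt -> Prop) x : A x -> hull A x.
Proof. intros Ax C _ HAC; exact (HAC x Ax). Qed.

Lemma hull_min (A C : pt -> Prop) x : convex C -> (forall q, A q -> C q) -> hull A x -> C x.
Proof. intros HC HAC Hx; exact (Hx C HC HAC). Qed.

Lemma convex_halfplane w k : convex (fun y => dot w y >= k).
Proof.
  intros y z t Hy Hz [Ht0 Ht1]; rewrite dot_comb.
  assert (0 <= (1 - t) * (dot w y - k)) by (apply Rmult_le_pos; lra).
  assert (0 <= t * (dot w z - k)) by (apply Rmult_le_pos; lra).
  lra.
Qed.

Lemma convex_open_halfplane w k : convex (fun y => dot w y < k).
Proof.
  intros y z t Hy Hz [Ht0 Ht1]; rewrite dot_comb.
  assert (0 <= (1 - t) * (k - dot w y)) by (apply Rmult_le_pos; lra).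
  assert (0 <= t * (k - dot w z)) by (apply Rmult_le_pos; lra).
  destruct (Req_dec t 0) as [->|Ht]; [lra|].
  assert (0 < t * (k - dot w z)) by (apply Rmult_lt_0_compat; lra).
  lra.
Qed.

Lemma convex_disk r : convex (fun y => sqnorm y <= r).
Proof.
  intros y z t Hy Hz [Ht0 Ht1]; rewrite sqnorm_comb.
  assert (0 <= sqdist y z) by (apply Rplus_le_le_0_compat; apply Rle_0_sqr).
  assert (0 <= t * (1 - t) * sqdist y z) by (apply Rmult_le_pos; [apply Rmult_le_pos|]; lra).
  assert ((1 - t) * sqnorm y <= (1 - t) * r) by (apply Rmult_le_compat_l; lra).
  assert (t * sqnorm z <= t * r) by (apply Rmult_le_compat_l; lra).
  lra.
Qed.

Lemma hull_sqnorm_le (A : pt -> Prop) r x :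
  (forall q, A q -> sqnorm q <= r) -> hull A x -> sqnorm x <= r.
Proof. apply hull_min, convex_disk. Qed.

Lemma hull_three_bary a b c la lb lc :
  0 <= la -> 0 <= lb -> 0 <= lc -> la + lb + lc = 1 -> hull (three a b c) (bary a b c la lb lc).
Proof.
  intros Ha Hb Hc Hs C HC Hg.
  assert (Ga : C a) by (apply Hg; left; reflexivity).
  assert (Gb : C b) by (apply Hg; right; left; reflexivity).
  assert (Gc : C c) by (apply Hg; right; right; reflexivity).
  destruct (Req_dec (lb + lc) 0) as [E|E].
  - replace (bary a b c la lb lc) with a; [exact Ga|].
    destruct a; unfold bary; simpl; f_equal; replace la with 1 by lra;
      replace lb with 0 by lra; replace lc with 0 by lra; ring.
  - (* first move from b towards c, then from a towards that point *)
    replace (bary a b c la lb lc) with (comb a (comb b c (lc / (lb + lc))) (lb + lc)).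
    + apply HC; [exact Ga| |lra].
      apply HC; [exact Gb|exact Gc|].
      split; [unfold Rdiv; apply Rmult_le_pos; [lra|apply Rlt_le, Rinv_0_lt_compat; lra]|].
      apply Rmult_le_reg_r with (lb + lc); [lra|].
      unfold Rdiv; rewrite Rmult_assoc, Rinv_l; lra.
    + destruct a, b, c; unfold comb, bary; simpl; replace la with (1 - lb - lc) by lra.
      f_equal; field; exact E.
Qed.

Lemma hull_three_far p q r w x k :
  hull (three p q r) x -> dot w x >= k -> dot w p >= k \/ dot w q >= k \/ dot w r >= k.
Proof.
  intros Hx Wx; apply NNPP; intro N.
  enough (dot w x < k) by lra.
  apply (hull_min (three p q r) _ x (convex_open_halfplane w k)); [|exact Hx].
  intros y [-> | [-> | ->]]; apply Rnot_ge_lt; intro; apply N; auto.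
Qed.

Definition unit_frame (a b c : pt) : Prop :=
  sqnorm a = 1 /\ sqnorm b = 1 /\ sqnorm c = 1 /\
  fst a + fst b + fst c = 0 /\ snd a + snd b + snd c = 0.

Lemma unit_frame_swap a b c : unit_frame a b c -> unit_frame b a c.
Proof. unfold unit_frame; intros; intuition lra. Qed.

Lemma unit_frame_rot a b c : unit_frame a b c -> unit_frame b c a.
Proof. unfold unit_frame; intros; intuition lra. Qed.

Lemma unit_frame_dot_sum a b c x : unit_frame a b c -> dot a x + dot b x + dot c x = 0.
Proof.
  intros (_ & _ & _ & S1 & S2); unfold dot.
  replace (fst c) with (- fst a - fst b) by lra; replace (snd c) with (- snd a - snd b) by lra.
  ring.
Qed.

Lemma unit_frame_dot a b c : unit_frame a b c -> dot a b = -1/2.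
Proof.
  intros (Na & Nb & Nc & S1 & S2); unfold sqnorm, dot in *.
  replace (fst c) with (- fst a - fst b) in Nc by lra;
    replace (snd c) with (- snd a - snd b) in Nc by lra.
  lra.
Qed.

Lemma unit_frame_det a b c : unit_frame a b c -> det a b <> 0.
Proof.
  intros F Z; pose proof (det_sq a b) as D.
  rewrite Z, (unit_frame_dot _ _ _ F) in D; destruct F as (Na & Nb & _).
  rewrite Na, Nb in D; lra.
Qed.

Lemma sqdist_dot x y : sqdist x y = sqnorm x + sqnorm y - 2 * dot x y.
Proof. unfold sqdist, sqnorm, dot; ring. Qed.

Lemma gram_det_eq0 a b c :
  dot a a * (dot b b * dot c c - dot b c * dot b c)
  - dot a b * (dot a b * dot c c - dot b c * dot c a)
  + dot c a * (dot a b * dot b c - dot b b * dot c a) = 0.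
Proof. unfold dot; ring. Qed.

Lemma inE_unit_frame a b c : inE a b c -> unit_frame a b c.
Proof.
  intros (Na & Nb & Nc & Hab & E1 & E2).
  rewrite !sqdist_dot, Na, Nb, Nc in E1, E2.
  set (k := dot a b) in *.
  assert (Kbc : dot b c = k) by lra.
  assert (Kca : dot c a = k) by lra.
  assert (Kne : k <> 1).
  { intro Hk; apply Hab.
    assert (E : sqdist a b = 0) by (rewrite sqdist_dot, Na, Nb; unfold k in Hk; lra).
    destruct a, b; unfold sqdist in E; simpl in E.
    apply Rplus_sqr_eq_0 in E; unfold Rsqr in E; f_equal; lra. }
  assert (G : (1 - k) * (1 - k) * (1 + 2 * k) = 0).
  { rewrite <- (gram_det_eq0 a b c); fold k; rewrite Kbc, Kca.
    unfold sqnorm in Na, Nb, Nc; unfold dot; rewrite Na, Nb, Nc; ring. }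
  assert (Hk : k = -1/2).
  { apply Rmult_integral in G; destruct G as [G|G]; [|lra].
    apply Rmult_integral in G; destruct G; lra. }
  split; [exact Na|split; [exact Nb|split; [exact Nc|]]].
  destruct a as [a1 a2], b as [b1 b2], c as [c1 c2].
  unfold k, dot, sqnorm in *; simpl in *.
  assert (Hs : (a1 + b1 + c1) * (a1 + b1 + c1) + (a2 + b2 + c2) * (a2 + b2 + c2) = 0) by nra.
  apply Rplus_sqr_eq_0 in Hs; unfold Rsqr in Hs; lra.
Qed.

Lemma unit_frame_dots a b c : unit_frame a b c ->
  dot a a = 1 /\ dot b b = 1 /\ dot c c = 1 /\
  dot a b = -1/2 /\ dot b a = -1/2 /\ dot b c = -1/2 /\
  dot c b = -1/2 /\ dot c a = -1/2 /\ dot a c = -1/2.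
Proof.
  intro F.
  pose proof (unit_frame_dot _ _ _ F) as Dab.
  pose proof (unit_frame_dot _ _ _ (unit_frame_rot _ _ _ F)) as Dbc.
  pose proof (unit_frame_dot _ _ _ (unit_frame_rot _ _ _ (unit_frame_rot _ _ _ F))) as Dca.
  destruct F as (Na & Nb & Nc & _).
  rewrite (dot_comm b a), (dot_comm c b), (dot_comm a c); unfold sqnorm, dot in *.
  repeat split; assumption.
Qed.

(* The barycentric coordinates of x are 1/3 + 2/3 (v . x), v = a, b, c. *)
Lemma unit_frame_hull a b c x : unit_frame a b c ->
  (hull (three a b c) x <-> dot a x >= -1/2 /\ dot b x >= -1/2 /\ dot c x >= -1/2).
Proof.
  intro F; pose proof (unit_frame_dot_sum _ _ _ x F) as Sx.
  destruct (unit_frame_dots _ _ _ F) as (Daa & Dbb & Dcc & Dab & Dba & Dbc & Dcb & Dca & Dac).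
  split.
  - apply (hull_min _ (fun y => dot a y >= -1/2 /\ dot b y >= -1/2 /\ dot c y >= -1/2)).
    + intros y z t (Ya & Yb & Yc) (Za & Zb & Zc) Ht.
      repeat split; apply (convex_halfplane _ _ y z t); assumption.
    + intros q [-> | [-> | ->]]; lra.
  - intros (Xa & Xb & Xc).
    replace x with (bary a b c (1/3 + 2/3 * dot a x) (1/3 + 2/3 * dot b x) (1/3 + 2/3 * dot c x)).
    + apply hull_three_bary; lra.
    + apply (eq_of_dot_eq a b); [exact (unit_frame_det _ _ _ F)| |];
        rewrite dot_bary, ?Daa, ?Dab, ?Dac, ?Dba, ?Dbb, ?Dbc; lra.
Qed.

Lemma unit_frame_obtuse a b c d : unit_frame a b c -> d <> (0, 0) ->
  dot a d < 0 \/ dot b d < 0 \/ dot c d < 0.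
Proof.
  intros F Hd; apply NNPP; intro N; apply Hd.
  pose proof (unit_frame_dot_sum _ _ _ d F).
  apply (eq_of_dot_eq a b); [exact (unit_frame_det _ _ _ F)| |]; rewrite dot0r;
    apply Rle_antisym; apply Rnot_lt_le; intro; apply N; auto; lra.
Qed.

Lemma unit_frame_far_unique a b c y : unit_frame a b c -> sqnorm y < 1 ->
  dot a y >= 1/2 -> dot b y >= 1/2 -> False.
Proof.
  intros F Hy Ha Hb.
  pose proof (unit_frame_dot_sum _ _ _ y F).
  pose proof (dot_sq_le c y) as CS; destruct F as (_ & _ & Nc & _).
  rewrite Nc in CS; nra.
Qed.

Lemma polar_form p : sqnorm p < 1 ->
  exists rho u, 0 <= rho < 1 /\ sqnorm u = 1 /\ p = scale rho u.
Proof.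
  intro Hp.
  destruct (Req_dec (sqnorm p) 0) as [Z|Z].
  - exists 0, (1, 0); split; [lra|split; [unfold sqnorm; simpl; ring|]].
    destruct p as [p1 p2]; unfold sqnorm in Z; simpl in Z.
    apply Rplus_sqr_eq_0 in Z; destruct Z as [-> ->]; unfold scale; simpl; f_equal; ring.
  - pose proof (sqnorm_ge0 p).
    set (rho := sqrt (sqnorm p)).
    assert (R2 : rho * rho = sqnorm p) by (apply sqrt_sqrt; lra).
    assert (Rp : 0 < rho) by (apply sqrt_lt_R0; lra).
    exists rho, (scale (/ rho) p); split; [nra|split].
    + rewrite sqnorm_scale, <- R2; field; lra.
    + destruct p; unfold scale; simpl; f_equal; field; lra.
Qed.

(* -u and the rotations of u by +-60 degrees. *)
Lemma unit_frame_around p : sqnorm p < 1 ->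
  exists a b c, unit_frame a b c /\ dot a p < 1/2 /\ dot b p < 1/2 /\ dot c p < 1/2.
Proof.
  intro Hp; destruct (polar_form p Hp) as (rho & [u1 u2] & Hr & Hu & ->).
  set (h := sqrt 3 / 2).
  assert (Hh : h * h = 3/4).
  { unfold h; replace (sqrt 3 / 2 * (sqrt 3 / 2)) with (sqrt 3 * sqrt 3 / 4) by field.
    rewrite sqrt_sqrt; lra. }
  exists (- u1, - u2), (u1 / 2 - h * u2, h * u1 + u2 / 2), (u1 / 2 + h * u2, - h * u1 + u2 / 2).
  unfold unit_frame, sqnorm, dot, scale in *; simpl in *.
  repeat split; nra.
Qed.

Lemma halfplane_avoiding p q r : sqnorm p < 1 -> sqnorm q < 1 -> sqnorm r < 1 ->
  exists w, sqnorm w = 1 /\ dot w p < 1/2 /\ dot w q < 1/2 /\ dot w r < 1/2.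
Proof.
  intros Hp Hq Hr.
  destruct (unit_frame_around p Hp) as (a & b & c & F & Pa & Pb & Pc).
  apply NNPP; intro N.
  assert (Far : forall w, sqnorm w = 1 -> dot w p < 1/2 -> dot w q >= 1/2 \/ dot w r >= 1/2).
  { intros w Hw Wp; apply NNPP; intro M; apply N; exists w.
    repeat split; try assumption; apply Rnot_ge_lt; intro; apply M; auto. }
  pose proof F as (Na & Nb & Nc & _).
  assert (Fbc := unit_frame_rot _ _ _ F).
  assert (Fac := unit_frame_swap _ _ _ (unit_frame_rot _ _ _ Fbc)).
  destruct (Far a Na Pa) as [Ha|Ha], (Far b Nb Pb) as [Hb|Hb], (Far c Nc Pc) as [Hc|Hc];
    eauto using unit_frame_far_unique.
Qed.

Definition polygon (l : list pt) (x : pt) : Prop := forall v, In v l -> dot v x >= -1/2.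

Definition spans_positively (l : list pt) : Prop :=
  forall d, d <> (0, 0) -> exists v, In v l /\ dot v d < 0.

Lemma In_argmin {A : Type} (P : A -> Prop) (f : A -> R) (l : list A) :
  (exists v, In v l /\ P v) -> exists v, In v l /\ P v /\ forall u, In u l -> P u -> f v <= f u.
Proof.
  induction l as [|x l IH]; simpl; [intros (v & [] & _)|intros Hex].
  destruct (classic (exists v, In v l /\ P v)) as [Hl|Hl].
  - destruct (IH Hl) as (v & Hv & Pv & Hm).
    destruct (classic (P x /\ f x <= f v)) as [[Px Le]|Nx].
    + exists x; repeat split; auto.
      intros u [<-|Hu] Pu; [lra|specialize (Hm u Hu Pu); lra].
    + exists v; repeat split; auto.
      intros u [<-|Hu] Pu; [|auto]. apply Rnot_lt_le; intro; apply Nx; split; [auto|lra].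
  - destruct Hex as (v & [<-|Hv] & Pv); [|exfalso; apply Hl; eauto].
    exists x; repeat split; auto.
    intros u [<-|Hu] Pu; [lra|exfalso; apply Hl; eauto].
Qed.

(* Walk from x along d until the first constraint v . y >= -1/2 with v . d < 0 becomes tight. *)
Lemma polygon_ray_exit l x d : polygon l x -> (exists v, In v l /\ dot v d < 0) ->
  exists t v, 0 <= t /\ In v l /\ dot v d < 0 /\
              dot v (ray x d t) = -1/2 /\ polygon l (ray x d t).
Proof.
  intros Hx Hex.
  destruct (In_argmin (fun v => dot v d < 0) (fun v => (dot v x + 1/2) / - dot v d) l Hex)
    as (v & Hv & Dv & Hm).
  set (t := (dot v x + 1/2) / - dot v d) in *.
  assert (Ht : t * - dot v d = dot v x + 1/2) by (unfold t; field; lra).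
  pose proof (Hx v Hv).
  assert (T0 : 0 <= t).
  { unfold t, Rdiv; apply Rmult_le_pos; [lra|apply Rlt_le, Rinv_0_lt_compat; lra]. }
  exists t, v; repeat split; auto.
  - rewrite dot_ray; lra.
  - intros u Hu; rewrite dot_ray; pose proof (Hx u Hu).
    destruct (Rlt_dec (dot u d) 0) as [Du|Du].
    + specialize (Hm u Hu Du).
      assert (Hu' : (dot u x + 1/2) / - dot u d * - dot u d = dot u x + 1/2) by (field; lra).
      nra.
    + nra.
Qed.

Lemma polygon_vertex l x u v : polygon l x -> In u l -> In v l ->
  dot u x = -1/2 -> dot v x = -1/2 -> det u v <> 0 -> vertex_of (polygon l) x.
Proof.
  intros Hx Hu Hv Xu Xv Huv; split; [exact Hx|].
  intros y z t Hy Hz Hyz Ht ->; apply Hyz.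
  rewrite dot_comb in Xu, Xv.
  pose proof (Hy u Hu); pose proof (Hz u Hu); pose proof (Hy v Hv); pose proof (Hz v Hv).
  assert (dot u y <= -1/2 /\ dot u z <= -1/2) as [] by (split; nra).
  assert (dot v y <= -1/2 /\ dot v z <= -1/2) as [] by (split; nra).
  apply (eq_of_dot_eq u v); [exact Huv|lra|lra].
Qed.

Lemma perp_orient v w : exists s, s * s = 1 /\ dot w (scale s (perp v)) >= 0.
Proof.
  destruct (Rle_dec 0 (dot w (perp v))) as [H|H]; [exists 1|exists (-1)];
    (split; [ring|]); unfold dot, scale in *; simpl in *; lra.
Qed.

(* Start at w/2, walk along w to an edge, then along that edge, in the direction that does not
   decrease w . x, to a corner. *)
Lemma polygon_far_vertex l w : (forall v, In v l -> sqnorm v = 1) -> spans_positively l ->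
  sqnorm w = 1 -> exists x, vertex_of (polygon l) x /\ dot w x >= 1/2.
Proof.
  intros Hl Hsp Hw.
  assert (Hnz : forall d, sqnorm d = 1 -> d <> (0, 0))
    by (intros d Hd ->; unfold sqnorm in Hd; simpl in Hd; lra).
  assert (X0 : polygon l (scale (1/2) w)).
  { intros v Hv; pose proof (dot_sq_le v w) as CS; rewrite (Hl v Hv), Hw in CS.
    unfold dot, scale in *; simpl; nra. }
  destruct (polygon_ray_exit l _ w X0 (Hsp w (Hnz w Hw))) as (t1 & v1 & T1 & Hv1 & _ & E1 & X1).
  set (x1 := ray (scale (1/2) w) w t1) in *.
  assert (W1 : dot w x1 >= 1/2).
  { unfold x1; rewrite dot_ray; replace (dot w w) with 1 by (rewrite <- Hw; reflexivity).
    unfold dot, scale; simpl; unfold sqnorm in Hw; nra. }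
  destruct (perp_orient v1 w) as (s & Hs & Dw).
  set (d := scale s (perp v1)) in *.
  assert (Hd : sqnorm d = 1).
  { unfold d; rewrite sqnorm_scale, Hs, Rmult_1_l, <- (Hl v1 Hv1).
    unfold sqnorm, perp; simpl; ring. }
  destruct (polygon_ray_exit l x1 d X1 (Hsp d (Hnz d Hd)))
    as (t2 & v2 & T2 & Hv2 & D2 & E2 & X2).
  exists (ray x1 d t2); split.
  - apply (polygon_vertex l _ v1 v2 X2 Hv1 Hv2); [|exact E2|].
    + rewrite dot_ray, <- E1; unfold d; rewrite dot_scale_perp; unfold det; ring.
    + intro Z; unfold d in D2; rewrite dot_scale_perp, Z in D2; lra.
  - rewrite dot_ray; nra.
Qed.

Fixpoint vertex_list (a b c : nat -> pt) (n : nat) : list pt :=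
  match n with O => nil | S m => a m :: b m :: c m :: vertex_list a b c m end.

Lemma In_vertex_list a b c n v :
  In v (vertex_list a b c n) <-> exists i, (i < n)%nat /\ three (a i) (b i) (c i) v.
Proof.
  unfold three; induction n as [|m IH]; simpl.
  - split; [tauto|intros (i & Hi & _); lia].
  - split.
    + intros [<-|[<-|[<-|H]]]; try (exists m; split; [lia|tauto]).
      destruct (proj1 IH H) as (i & Hi & Hv); exists i; split; [lia|exact Hv].
    + intros (i & Hi & Hv); destruct (Nat.eq_dec i m) as [->|Ne].
      * destruct Hv as [-> | [-> | ->]]; auto.
      * do 3 right; apply IH; exists i; split; [lia|exact Hv].
Qed.

Section Triangles.

Variables (n : nat) (a b c : nat -> pt).
Hypothesis frames : forall i, (i < n)%nat -> unit_frame (a i) (b i) (c i).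

Definition triangles_cap (x : pt) : Prop :=
  forall i, (i < n)%nat -> hull (three (a i) (b i) (c i)) x.

Lemma triangles_cap_polygon x : triangles_cap x <-> polygon (vertex_list a b c n) x.
Proof.
  split.
  - intros H v Hv; apply In_vertex_list in Hv as (i & Hi & Hv).
    apply (unit_frame_hull _ _ _ x (frames i Hi)) in H as (Ha & Hb & Hc); [|exact Hi].
    destruct Hv as [-> | [-> | ->]]; assumption.
  - intros H i Hi; apply (unit_frame_hull _ _ _ x (frames i Hi)).
    repeat split; apply H, In_vertex_list; exists i; unfold three; auto.
Qed.

Lemma vertex_list_unit v : In v (vertex_list a b c n) -> sqnorm v = 1.
Proof.
  intro Hv; apply In_vertex_list in Hv as (i & Hi & Hv).
  destruct (frames i Hi) as (Na & Nb & Nc & _).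
  destruct Hv as [-> | [-> | ->]]; assumption.
Qed.

Lemma vertex_list_spans : (0 < n)%nat -> spans_positively (vertex_list a b c n).
Proof.
  intros Hn d Hd.
  assert (Hin : forall v, three (a 0%nat) (b 0%nat) (c 0%nat) v -> In v (vertex_list a b c n))
    by (intros v Hv; apply In_vertex_list; exists 0%nat; split; [exact Hn|exact Hv]).
  unfold three in Hin.
  destruct (unit_frame_obtuse _ _ _ d (frames 0%nat Hn) Hd) as [H|[H|H]]; eexists;
    (split; [|exact H]); apply Hin; tauto.
Qed.

Lemma triangles_far_vertex w : (0 < n)%nat -> sqnorm w = 1 ->
  exists x, vertex_of triangles_cap x /\ dot w x >= 1/2.
Proof.
  intros Hn Hw.
  destruct (polygon_far_vertex _ w vertex_list_unit (vertex_list_spans Hn) Hw)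
    as (x & [Px Vx] & Wx).
  exists x; repeat split; [apply triangles_cap_polygon, Px| |exact Wx].
  intros y z t Hy Hz; apply Vx; apply triangles_cap_polygon; assumption.
Qed.

End Triangles.

Theorem mainTheorem13 (n : nat) (a b c : nat -> pt) (eps : R) :
  (forall i, (i < n)%nat -> inE (a i) (b i) (c i)) ->
  0 < eps < 1 ->
  let S := vertex_of (fun p => forall i, (i < n)%nat -> hull (three (a i) (b i) (c i)) p) in
  let s := sqrt (1 - eps) in
  let P := hull (fun p => exists i, (i < n)%nat /\
                   three (scale s (a i)) (scale s (b i)) (scale s (c i)) p) in
  ~ (exists T : pt -> Prop, is_triangle T /\ (forall p, S p -> T p) /\ (forall p, T p -> P p)).
Proof.
  intros HE Heps S s P (T & (p & q & r & _ & HT) & HST & HTP).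
  assert (frames : forall i, (i < n)%nat -> unit_frame (a i) (b i) (c i))
    by (intros i Hi; exact (inE_unit_frame _ _ _ (HE i Hi))).
  assert (inP : forall x, three p q r x -> P x) by (intros x Hx; apply HTP, HT, hull_incl, Hx).
  assert (P_disk : forall x, P x -> sqnorm x < 1).
  { intros x Hx; enough (sqnorm x <= 1 - eps) by lra.
    revert Hx; apply hull_sqnorm_le.
    intros y (i & Hi & Hy); destruct (frames i Hi) as (Na & Nb & Nc & _).
    assert (Hs : s * s = 1 - eps) by (apply sqrt_sqrt; lra).
    destruct Hy as [-> | [-> | ->]]; rewrite sqnorm_scale, Hs; [rewrite Na|rewrite Nb|rewrite Nc];
      lra. }
  destruct (halfplane_avoiding p q r) as (w & Hw & Wp & Wq & Wr);
    try (apply P_disk, inP; unfold three; auto).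
  destruct n as [|m].
  - apply (inP p (or_introl eq_refl) (fun _ => False)); [intros ? ? ? []|].
    intros x (i & Hi & _); lia.
  - destruct (triangles_far_vertex _ a b c frames w ltac:(lia) Hw) as (x & Sx & Wx).
    destruct (hull_three_far p q r w x _ (proj1 (HT x) (HST x Sx)) Wx) as [|[|]]; lra.
Qed.
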